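(* Let $(\mathcal A;\mathcal E)$ be an exact category and let $\mathcal J_1,\mathcal J_2$ be ideals of $\mathcal A$. If $\mathcal J_1$ and $\mathcal J_2$ are monic preenveloping, then so are $\mathcal J_1\cap\mathcal J_2$ and $\mathcal J_1+\mathcal J_2$. Dually, if $\mathcal J_1$ and $\mathcal J_2$ are epic precovering, then so are $\mathcal J_1\cap\mathcal J_2$ and $\mathcal J_1+\mathcal J_2$.
   Context: An exact category $(\mathcal A;\mathcal E)$ (in the sense of Quillen/Keller/Bühler) is an additive category $\mathcal A$ with a class $\mathcal E$ of kernel–cokernel pairs $B\xrightarrow{m}C\xrightarrow{p}A$, called conflations ($m$ an inflation, $p$ a deflation), closed under isomorphism, containing identities as inflations/deflations, with inflations and deflations closed under composition, and with pushouts of inflations along arbitrary morphisms existing and being inflations (dually for pullbacks of deflations). An ideal $\mathcal J$ of $\mathcal A$ is a family of subgroups $\mathcal J(A,B)\subseteq\mathrm{Hom}(A,B)$ closed under composition on either side with arbitrary morphisms; $\mathcal J_1\cap\mathcal J_2$ and $\mathcal J_1+\mathcal J_2$ are formed objectwise. $\mathcal J$ is preenveloping if every object $B$ has a $\mathcal J$-preenvelope: a morphism $j:B\to J$ in $\mathcal J$ through which every morphism in $\mathcal J$ with domain $B$ factors. $\mathcal J$ is monic preenveloping if every object $B$ admits a $\mathcal J$-preenvelope that is an inflation. Dually, $\mathcal I$ is epic precovering if every object admits an $\mathcal I$-precover (a morphism in $\mathcal I$ into it through which every morphism of $\mathcal I$ into it factors) that is a deflation. *)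

From HB Require Import structures.
From mathcomp Require Import all_boot all_algebra.
Set Implicit Arguments. Unset Strict Implicit. Unset Printing Implicit Defensive.
Import GRing.Theory.
Local Open Scope ring_scope.

Record PreaddCat := {
  Ob : Type;
  Hom : Ob -> Ob -> zmodType;
  comp : forall A B C : Ob, Hom B C -> Hom A B -> Hom A C;
  idm : forall A : Ob, Hom A A;
  compA : forall A B C D (h : Hom C D) (g : Hom B C) (f : Hom A B),
      comp h (comp g f) = comp (comp h g) f;
  comp1m : forall A B (f : Hom A B), comp (idm B) f = f;
  compm1 : forall A B (f : Hom A B), comp f (idm A) = f;
  compDl : forall A B C (g g' : Hom B C) (f : Hom A B),
      comp (g + g') f = comp g f + comp g' f;
  compDr : forall A B C (g : Hom B C) (f f' : Hom A B),
      comp g (f + f') = comp g f + comp g f'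
}.

Arguments comp {p A B C} _ _.
Arguments idm {p} A.
Arguments Hom : clear implicits.

Section Basics.
Variable C : PreaddCat.
Local Notation Obj := (Ob C).
Local Notation Hm := (Hom C).

Definition is_iso (A B : Obj) (f : Hm A B) : Prop :=
  exists g : Hm B A, comp g f = idm A /\ comp f g = idm B.

Definition is_kernel (B X A : Obj) (m : Hm B X) (p : Hm X A) : Prop :=
  comp p m = 0 /\
  forall (T : Obj) (x : Hm T X), comp p x = 0 ->
    exists y : Hm T B, comp m y = x /\
      forall y' : Hm T B, comp m y' = x -> y' = y.

Definition is_cokernel (B X A : Obj) (m : Hm B X) (p : Hm X A) : Prop :=
  comp p m = 0 /\
  forall (T : Obj) (x : Hm X T), comp x m = 0 ->
    exists y : Hm A T, comp y p = x /\
      forall y' : Hm A T, comp y' p = x -> y' = y.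

Definition kernel_cokernel_pair (B X A : Obj) (m : Hm B X) (p : Hm X A) :=
  is_kernel m p /\ is_cokernel m p.

Definition is_pushout (B X B' X' : Obj) (m : Hm B X) (f : Hm B B')
    (g : Hm X X') (m' : Hm B' X') : Prop :=
  comp g m = comp m' f /\
  forall (T : Obj) (x : Hm X T) (y : Hm B' T), comp x m = comp y f ->
    exists u : Hm X' T, (comp u g = x /\ comp u m' = y) /\
      forall u' : Hm X' T, comp u' g = x -> comp u' m' = y -> u' = u.

Definition is_pullback (X A A' X' : Obj) (p : Hm X A) (f : Hm A' A)
    (g : Hm X' X) (p' : Hm X' A') : Prop :=
  comp p g = comp f p' /\
  forall (T : Obj) (x : Hm T X) (y : Hm T A'), comp p x = comp f y ->
    exists u : Hm T X', (comp g u = x /\ comp p' u = y) /\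
      forall u' : Hm T X', comp g u' = x -> comp p' u' = y -> u' = u.

End Basics.

Record AddCat := {
  add_pre :> PreaddCat;
  zero_object : exists Z : Ob add_pre, idm Z = 0;
  biproducts : forall A B : Ob add_pre, exists (S : Ob add_pre)
      (i1 : Hom add_pre A S) (i2 : Hom add_pre B S)
      (p1 : Hom add_pre S A) (p2 : Hom add_pre S B),
      [/\ comp p1 i1 = idm A, comp p2 i2 = idm B,
          comp p1 i2 = 0, comp p2 i1 = 0 &
          comp i1 p1 + comp i2 p2 = idm S]
}.

Record ExactCat := {
  ex_add :> AddCat;
  conf : forall B X A : Ob ex_add, Hom ex_add B X -> Hom ex_add X A -> Prop;
  conf_kc : forall B X A (m : Hom ex_add B X) (p : Hom ex_add X A),
      conf m p -> kernel_cokernel_pair m p;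
  conf_iso : forall B X A B' X' A' (m : Hom ex_add B X) (p : Hom ex_add X A)
      (m' : Hom ex_add B' X') (p' : Hom ex_add X' A')
      (a : Hom ex_add B B') (b : Hom ex_add X X') (c : Hom ex_add A A'),
      conf m p -> is_iso a -> is_iso b -> is_iso c ->
      comp b m = comp m' a -> comp c p = comp p' b -> conf m' p';
  conf_id_infl : forall A : Ob ex_add,
      exists (Z : Ob ex_add) (p : Hom ex_add A Z), conf (idm A) p;
  conf_id_defl : forall A : Ob ex_add,
      exists (Z : Ob ex_add) (m : Hom ex_add Z A), conf m (idm A);
  conf_infl_comp : forall B X Y (m : Hom ex_add B X) (n : Hom ex_add X Y),
      (exists A (p : Hom ex_add X A), conf m p) ->
      (exists A (p : Hom ex_add Y A), conf n p) ->
      exists A (p : Hom ex_add Y A), conf (comp n m) p;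
  conf_defl_comp : forall X Y A (p : Hom ex_add X Y) (q : Hom ex_add Y A),
      (exists B (m : Hom ex_add B X), conf m p) ->
      (exists B (m : Hom ex_add B Y), conf m q) ->
      exists B (m : Hom ex_add B X), conf m (comp q p);
  conf_pushout : forall B X B' (m : Hom ex_add B X) (f : Hom ex_add B B'),
      (exists A (p : Hom ex_add X A), conf m p) ->
      exists X' (g : Hom ex_add X X') (m' : Hom ex_add B' X'),
        is_pushout m f g m' /\ exists A (p : Hom ex_add X' A), conf m' p;
  conf_pullback : forall X A A' (p : Hom ex_add X A) (f : Hom ex_add A' A),
      (exists B (m : Hom ex_add B X), conf m p) ->
      exists X' (g : Hom ex_add X' X) (p' : Hom ex_add X' A'),
        is_pullback p f g p' /\ exists B (m : Hom ex_add B X'), conf m p'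
}.

Section Ideals.
Variable E : ExactCat.
Local Notation Obj := (Ob E).
Local Notation Hm := (Hom E).

Definition inflation (B X : Obj) (m : Hm B X) : Prop :=
  exists (A : Obj) (p : Hm X A), conf m p.
Definition deflation (X A : Obj) (p : Hm X A) : Prop :=
  exists (B : Obj) (m : Hm B X), conf m p.

Definition morph_class := forall A B : Obj, Hm A B -> Prop.

Definition is_ideal (J : morph_class) : Prop :=
  (forall A B, J A B 0) /\
  (forall A B (f g : Hm A B), J A B f -> J A B g -> J A B (f - g)) /\
  (forall A B X (f : Hm A B) (h : Hm B X), J A B f -> J A X (comp h f)) /\
  (forall A B X (f : Hm A B) (h : Hm X A), J A B f -> J X B (comp f h)).

Definition ideal_cap (J1 J2 : morph_class) : morph_class :=
  fun A B f => J1 A B f /\ J2 A B f.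

Definition ideal_sum (J1 J2 : morph_class) : morph_class :=
  fun A B f => exists g h : Hm A B, J1 A B g /\ J2 A B h /\ f = g + h.

Definition is_preenvelope (J : morph_class) (B Y : Obj) (j : Hm B Y) : Prop :=
  J B Y j /\
  forall (X : Obj) (f : Hm B X), J B X f -> exists g : Hm Y X, comp g j = f.

Definition is_precover (J : morph_class) (Y B : Obj) (j : Hm Y B) : Prop :=
  J Y B j /\
  forall (X : Obj) (f : Hm X B), J X B f -> exists g : Hm X Y, comp j g = f.

Definition monic_preenveloping (J : morph_class) : Prop :=
  forall B : Obj, exists (Y : Obj) (j : Hm B Y), is_preenvelope J j /\ inflation j.

Definition epic_precovering (J : morph_class) : Prop :=
  forall B : Obj, exists (Y : Obj) (j : Hm Y B), is_precover J j /\ deflation j.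

End Ideals.

(** For the intersection, push the J1-envelope [j1] out along the J2-envelope
    [j2]: the composite [B -> Y2 -> W] is an inflation lying in both ideals, and
    a map in both factors through [j1] and through [j2], hence through it by
    the pushout property.  For the sum, the map [B -> Y1 (+) Y2] with components
    [j1] and [j2] is an inflation: it is the pushout of [j1] along the split
    inflation [B -> B (+) Y2], precomposed with the inflation [(1, j2)], which
    is that split inflation twisted by a unipotent automorphism.  Precovers are
    the same statements in the opposite exact category. *)
From Pilot Require
Import Defs.
From mathcomp Require Import all_boot all_algebra.
Import Defs.
Set Implicit Arguments. Unset Strict Implicit. Unset Printing Implicit Defensive.
Import GRing.Theory.
Local Open Scope ring_scope.

Section PreaddTheory.
Variable C : PreaddCat.
Local Notation Hm := (Hom C).

Lemma comp0m (A B D : Ob C) (f : Hm A B) : comp (0 : Hm B D) f = 0.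
Proof. by apply: (addrI (comp (0 : Hm B D) f)); rewrite -compDl !addr0. Qed.

Lemma compm0 (A B D : Ob C) (g : Hm B D) : comp g (0 : Hm A B) = 0.
Proof. by apply: (addrI (comp g (0 : Hm A B))); rewrite -compDr !addr0. Qed.

Lemma compNm (A B D : Ob C) (g : Hm B D) (f : Hm A B) :
  comp (- g) f = - comp g f.
Proof. by apply: (addrI (comp g f)); rewrite -compDl !subrr comp0m. Qed.

Lemma compmN (A B D : Ob C) (g : Hm B D) (f : Hm A B) :
  comp g (- f) = - comp g f.
Proof. by apply: (addrI (comp g f)); rewrite -compDr !subrr compm0. Qed.

Lemma is_iso_idm (A : Ob C) : is_iso (idm A).
Proof. by exists (idm A); rewrite comp1m. Qed.

Lemma iso_square_inv (A A' X X' : Ob C) (f : Hm A X) (g : Hm A' X')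
    (a : Hm A A') (a' : Hm A' A) (b : Hm X X') (b' : Hm X' X) :
  comp a a' = idm A' -> comp b' b = idm X ->
  comp b f = comp g a -> comp b' g = comp f a'.
Proof.
move=> aa' b'b bf_ga.
by rewrite -[g]compm1 -aa' (compA g) -bf_ga !compA b'b comp1m.
Qed.

Lemma is_iso_idmD (A : Ob C) (a : Hm A A) : comp a a = 0 -> is_iso (idm A + a).
Proof.
move=> aa0; exists (idm A - a).
by split; rewrite !(compDl, compDr, compNm, compmN, comp1m, compm1) aa0 ?subr0;
  rewrite ?addrK ?addrNK.
Qed.

End PreaddTheory.

Section ExactTheory.
Variable E : ExactCat.
Local Notation Obj := (Ob E).
Local Notation Hm := (Hom E).

Lemma inflation_comp_iso (B X X' : Obj) (m : Hm B X) (b : Hm X X') :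
  inflation m -> is_iso b -> inflation (comp b m).
Proof.
move=> [A [p cmp]] isob; have [b' [b'b _]] := isob.
exists A, (comp p b').
apply: (conf_iso cmp (is_iso_idm B) isob (is_iso_idm A)); first by rewrite compm1.
by rewrite comp1m -compA b'b compm1.
Qed.

Lemma conf_iso_inv (B X A B' X' A' : Obj) (m : Hm B X) (p : Hm X A)
    (m' : Hm B' X') (p' : Hm X' A') (a : Hm B' B) (b : Hm X' X) (c : Hm A' A) :
  conf m p -> is_iso a -> is_iso b -> is_iso c ->
  comp b m' = comp m a -> comp c p' = comp p b -> conf m' p'.
Proof.
move=> cmp [a' [a'a aa']] [b' [b'b bb']] [c' [c'c cc']] bm'_ma cp'_pb.
apply: (conf_iso cmp (a := a') (b := b') (c := c')).
- by exists a.
- by exists b.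
- by exists c.
- exact: iso_square_inv aa' b'b bm'_ma.
- exact: iso_square_inv bb' c'c cp'_pb.
Qed.

Lemma ideal_compl (J : morph_class E) (A B X : Obj) (f : Hm A B) (h : Hm B X) :
  is_ideal J -> J A B f -> J A X (comp h f).
Proof. by case=> _ [_ [Jl _]]; apply: Jl. Qed.

(* The kernel of the deflation [idm Y] is zero, so pushing it out along
   [0 : Z -> B] yields a coproduct of [B] and [Y]. *)
Lemma exists_coproduct_inflation (B Y : Obj) :
  exists (S : Obj) (e1 : Hm B S) (e2 : Hm Y S), inflation e1 /\
    forall (T : Obj) (x : Hm B T) (y : Hm Y T),
      exists u : Hm S T, comp u e1 = x /\ comp u e2 = y.
Proof.
have [Z [m cmY]] := conf_id_defl Y.
have m0 : m = 0 by have [[+ _] _] := conf_kc cmY; rewrite comp1m.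
have [S [e2 [e1 [[_ po] infl_e1]]]] :=
  conf_pushout (0 : Hm Z B) (ex_intro _ Y (ex_intro _ (idm Y) cmY)).
exists S, e1, e2; split=> // T x y.
have [u [[ue2 ue1] _]] := po T y x (ltac:(by rewrite m0 !compm0)).
by exists u.
Qed.

Lemma inflation_graph (B Y : Obj) (j : Hm B Y) :
  exists (S : Obj) (e1 : Hm B S) (e2 : Hm Y S),
    inflation (e1 + comp e2 j) /\
    forall (T : Obj) (x : Hm B T) (y : Hm Y T),
      exists u : Hm S T, comp u e1 = x /\ comp u e2 = y.
Proof.
have [S [e1 [e2 [infl_e1 univ]]]] := exists_coproduct_inflation B Y.
exists S, e1, e2; split=> //.
have [q [qe1 qe2]] := univ B (idm B) 0.
have nil2 : comp (comp e2 (comp j q)) (comp e2 (comp j q)) = 0.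
  by rewrite -!compA (compA q e2) qe2 comp0m !compm0.
have := inflation_comp_iso infl_e1 (is_iso_idmD nil2).
by rewrite compDl comp1m -!compA qe1 compm1.
Qed.

Lemma inflation_pair (B Y1 Y2 : Obj) (j1 : Hm B Y1) (j2 : Hm B Y2) :
  inflation j1 ->
  exists (W : Obj) (k1 : Hm Y1 W) (k2 : Hm Y2 W),
    inflation (comp k1 j1 + comp k2 j2) /\
    forall (X : Obj) (a1 : Hm Y1 X) (a2 : Hm Y2 X),
      exists u : Hm W X, comp u k1 = a1 /\ comp u k2 = a2.
Proof.
move=> infl_j1.
have [S [e1 [e2 [infl_graph univ]]]] := inflation_graph j2.
have [W [k1 [n [[k1j1 po] infl_n]]]] := conf_pushout e1 infl_j1.
exists W, k1, (comp n e2); split.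
  by rewrite k1j1 -compA -compDr; apply: conf_infl_comp.
move=> X a1 a2; have [y [ye1 ye2]] := univ X (comp a1 j1) a2.
have [u [[uk1 un] _]] := po X a1 y (esym ye1).
by exists u; rewrite compA un.
Qed.

Lemma monic_preenveloping_cap (J1 J2 : morph_class E) :
  is_ideal J1 -> is_ideal J2 ->
  monic_preenveloping J1 -> monic_preenveloping J2 ->
  monic_preenveloping (ideal_cap J1 J2).
Proof.
move=> idJ1 idJ2 env1 env2 B.
have [Y1 [j1 [[J1j1 fact1] infl_j1]]] := env1 B.
have [Y2 [j2 [[J2j2 fact2] infl_j2]]] := env2 B.
have [W [g [n [[gj1 po] infl_n]]]] := conf_pushout j2 infl_j1.
exists W, (comp n j2); split; last exact: conf_infl_comp.
split; first by split; [rewrite -gj1|]; apply: ideal_compl.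
move=> X f [J1f J2f].
have [a1 a1j1] := fact1 X f J1f; have [a2 a2j2] := fact2 X f J2f.
have [u [[_ un] _]] := po X a1 a2 (ltac:(by rewrite a1j1 a2j2)).
by exists u; rewrite compA un.
Qed.

Lemma monic_preenveloping_sum (J1 J2 : morph_class E) :
  is_ideal J1 -> is_ideal J2 ->
  monic_preenveloping J1 -> monic_preenveloping J2 ->
  monic_preenveloping (ideal_sum J1 J2).
Proof.
move=> idJ1 idJ2 env1 env2 B.
have [Y1 [j1 [[J1j1 fact1] infl_j1]]] := env1 B.
have [Y2 [j2 [[J2j2 fact2] _]]] := env2 B.
have [W [k1 [k2 [infl_k univ]]]] := inflation_pair j2 infl_j1.
exists W, (comp k1 j1 + comp k2 j2); split=> //; split.
  by exists (comp k1 j1), (comp k2 j2); do !split; apply: ideal_compl.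
move=> X _ [f1 [f2 [J1f1 [J2f2 ->]]]].
have [a1 <-] := fact1 X f1 J1f1; have [a2 <-] := fact2 X f2 J2f2.
have [u [uk1 uk2]] := univ X a1 a2.
by exists u; rewrite compDr !compA uk1 uk2.
Qed.

End ExactTheory.

Definition preadd_op (C : PreaddCat) : PreaddCat := {|
  Ob := Ob C;
  Hom := fun A B => Hom C B A;
  comp := fun A B D g f => comp f g;
  idm := @idm C;
  compA := fun A B D F h g f => esym (compA f g h);
  comp1m := fun A B f => compm1 f;
  compm1 := fun A B f => comp1m f;
  compDl := fun A B D g g' f => compDr f g g';
  compDr := fun A B D g f f' => compDl f f' g |}.

Definition add_op (C : AddCat) : AddCat.
Proof.
refine {| add_pre := preadd_op C; zero_object := zero_object C |}.
move=> A B; have [S [i1 [i2 [p1 [p2 [? ? ? ? ?]]]]]] := biproducts A B.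
by exists S, p1, p2, i1, i2.
Defined.

Lemma is_iso_of_op (C : PreaddCat) (A B : Ob C) (f : Hom C A B) :
  @is_iso (preadd_op C) B A f -> is_iso f.
Proof. by case=> g [? ?]; exists g. Qed.

Definition exact_op (E : ExactCat) : ExactCat.
Proof.
refine {| ex_add := add_op E; conf := fun B X A m p => conf p m |}.
- by move=> B X A m p /conf_kc [].
- move=> B X A B' X' A' m p m' p' a b c cpm /is_iso_of_op isoa /is_iso_of_op isob.
  move=> /is_iso_of_op isoc bm cp.
  exact: (conf_iso_inv cpm isoc isob isoa (esym cp) (esym bm)).
- exact (@conf_id_defl E).
- exact (@conf_id_infl E).
- by move=> *; apply: conf_defl_comp.
- by move=> *; apply: conf_infl_comp.
- by move=> *; apply: conf_pullback.
- by move=> *; apply: conf_pushout.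
Defined.

Definition class_op (E : ExactCat) (J : morph_class E) : morph_class (exact_op E) :=
  fun A B f => J B A f.

Lemma is_ideal_op (E : ExactCat) (J : morph_class E) :
  is_ideal J -> is_ideal (class_op J).
Proof.
case=> J0 [JB [Jl Jr]]; split=> [A B|]; first exact: J0.
split=> [A B f g|]; first exact: JB.
by split=> A B X f h; [apply: Jr | apply: Jl].
Qed.

Theorem proposition2p2 (E : ExactCat) (J1 J2 : morph_class E) :
  is_ideal J1 -> is_ideal J2 ->
  (monic_preenveloping J1 -> monic_preenveloping J2 ->
     monic_preenveloping (ideal_cap J1 J2) /\
     monic_preenveloping (ideal_sum J1 J2)) /\
  (epic_precovering J1 -> epic_precovering J2 ->
     epic_precovering (ideal_cap J1 J2) /\
     epic_precovering (ideal_sum J1 J2)).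
Proof.
move=> idJ1 idJ2; split=> [env1 env2 | cov1 cov2]; split.
- exact: monic_preenveloping_cap.
- exact: monic_preenveloping_sum.
- exact: (monic_preenveloping_cap (is_ideal_op idJ1) (is_ideal_op idJ2) cov1 cov2).
- exact: (monic_preenveloping_sum (is_ideal_op idJ1) (is_ideal_op idJ2) cov1 cov2).
Qed.
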